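(* Let $X$ be a Fréchet space and let $\Gamma:[0,1]\to ck(X)$ be Bochner measurable. Then there is a set $N\subseteq[0,1]$ with $\mu(N)=0$ such that $\bigcup_{t\in[0,1]\setminus N}\Gamma(t)$ is a separable subset of $X$.
   Context: $X$ is a Fréchet space with topology generated by an increasing sufficient sequence of seminorms $(p_i)$ and translation-invariant metric $d(x,y)=\sum_{i\ge1}2^{-i}\frac{p_i(x-y)}{1+p_i(x-y)}$. $cb(X)$ (resp. $ck(X)$) is the family of nonempty closed bounded convex (resp. compact convex) subsets of $X$; $H$ is the Hausdorff metric on $cb(X)$ induced by $d$. $\mu$ is Lebesgue measure on $[0,1]$. A simple multifunction is $\sum_{j=1}^p\chi_{A_j}C_j$ with $A_j$ pairwise disjoint Lebesgue measurable sets and $C_j\in cb(X)$. $\Gamma$ is Bochner measurable if there are simple multifunctions $\Gamma_n$ with $H(\Gamma_n(t),\Gamma(t))\to0$ for a.e. $t\in[0,1]$. *)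

From HB Require Import structures.
From mathcomp Require Import all_boot all_order all_algebra.
From mathcomp Require Import all_classical all_reals all_analysis.
Set Implicit Arguments. Unset Strict Implicit. Unset Printing Implicit Defensive.
Import Order.TTheory GRing.Theory Num.Theory.
Import numFieldNormedType.Exports.
Local Open Scope classical_set_scope.
Local Open Scope ring_scope.

Section Frechet.
Variables (R : realType) (X : lmodType R).

Definition seminorm (q : X -> R) : Prop :=
  (forall x y, q (x + y) <= q x + q y) /\ (forall (a : R) x, q (a *: x) = `|a| * q x).

(** translation-invariant metric induced by the sequence of seminorms
    (index i : nat here corresponds to index i+1 in the paper) *)
Definition fdist (p : nat -> X -> R) (x y : X) : R :=
  limn (@series R (fun i : nat => (2 ^- i.+1) * (p i (x - y) / (1 + p i (x - y))))).

Definition dCauchy (p : nat -> X -> R) (u : nat -> X) : Prop :=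
  forall e : R, 0 < e -> exists N : nat, forall m n : nat,
    (N <= m)%N -> (N <= n)%N -> fdist p (u m) (u n) < e.

Definition dconverges (p : nat -> X -> R) (u : nat -> X) (x : X) : Prop :=
  forall e : R, 0 < e -> exists N : nat, forall n : nat, (N <= n)%N -> fdist p (u n) x < e.

Definition frechet (p : nat -> X -> R) : Prop :=
  [/\ forall i, seminorm (p i),
      forall i x, p i x <= p i.+1 x,
      forall x, (forall i, p i x = 0) -> x = 0
    & forall u, dCauchy p u -> exists x, dconverges p u x].

(** topological notions (for the metric d, which induces the Fréchet topology) *)
Definition dopen (p : nat -> X -> R) (U : set X) : Prop :=
  forall x, U x -> exists2 e : R, 0 < e & forall y, fdist p x y < e -> U y.

Definition dclosed (p : nat -> X -> R) (C : set X) : Prop :=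
  forall x, (forall e : R, 0 < e -> exists2 y, C y & fdist p x y < e) -> C x.

Definition dcompact (p : nat -> X -> R) (K : set X) : Prop :=
  forall (I : Type) (U : I -> set X), (forall i, dopen p (U i)) ->
    K `<=` \bigcup_(i in [set: I]) U i ->
    exists2 F : set I, finite_set F & K `<=` \bigcup_(i in F) U i.

Definition fbounded (p : nat -> X -> R) (C : set X) : Prop :=
  forall i, exists M : R, forall x, C x -> p i x <= M.

Definition convex_set (C : set X) : Prop :=
  forall x y (l : R), C x -> C y -> 0 <= l -> l <= 1 -> C (l *: x + (1 - l) *: y).

Definition cb (p : nat -> X -> R) (C : set X) : Prop :=
  [/\ C !=set0, dclosed p C, fbounded p C & convex_set C].

Definition ck (p : nat -> X -> R) (C : set X) : Prop :=
  [/\ C !=set0, dcompact p C & convex_set C].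

Definition hexcess (p : nat -> X -> R) (A B : set X) : R :=
  sup [set inf [set fdist p a b | b in B] | a in A].

Definition hausdorff (p : nat -> X -> R) (A B : set X) : R :=
  Num.max (hexcess p A B) (hexcess p B A).

Definition set_add (A B : set X) : set X := [set a + b | a in A & b in B].
Definition set_scale (a : R) (A : set X) : set X := [set a *: x | x in A].

(** Lebesgue measurable subsets of R (Carathéodory-measurable for the
    Lebesgue outer measure, i.e. the completed Lebesgue sigma-algebra) *)
Definition leb_measurable (A : set R) : Prop :=
  ((wlength (@idfun R))^*)%mu.-cara.-measurable A.

(** simple multifunction  t |-> \sum_j chi_{A_j}(t) C_j *)
Definition simple_multifunction (p : nat -> X -> R) (G : R -> set X) : Prop :=
  exists s : seq (set R * set X),
    [/\ forall j, (j < size s)%N -> leb_measurable (nth (set0, set0) s j).1 /\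
                  (nth (set0, set0) s j).1 `<=` `[0, 1]%classic,
        forall j k, (j < size s)%N -> (k < size s)%N -> j <> k ->
          (nth (set0, set0) s j).1 `&` (nth (set0, set0) s k).1 = set0,
        forall j, (j < size s)%N -> cb p (nth (set0, set0) s j).2
      & G = fun t => foldr (fun AC S => set_add (set_scale (\1_(AC.1) t) AC.2) S)
                           [set 0] s].

Definition bochner_measurable (p : nat -> X -> R) (Gam : R -> set X) : Prop :=
  exists Gn : nat -> R -> set X,
    (forall n, simple_multifunction p (Gn n)) /\
    exists N : set R, (@lebesgue_measure R).-negligible N /\
      forall t, `[0, 1]%classic t -> ~ N t ->
        (fun n => hausdorff p (Gn n t) (Gam t)) @ \oo --> (0 : R).

Definition dseparable (p : nat -> X -> R) (S : set X) : Prop :=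
  exists D : set X, [/\ countable D, D `<=` S &
    forall x, S x -> forall e : R, 0 < e -> exists2 y, D y & fdist p x y < e].

End Frechet.

From HB Require Import structures.
From mathcomp Require Import all_boot all_order all_algebra.
From mathcomp Require Import all_classical all_reals all_analysis.
From mathcomp Require Import lra.
Set Implicit Arguments. Unset Strict Implicit. Unset Printing Implicit Defensive.
Import Order.TTheory GRing.Theory Num.Theory.
Import numFieldNormedType.Exports.
Local Open Scope classical_set_scope.
Local Open Scope ring_scope.

(* A simple multifunction takes finitely many values, and which value it takes
   at t is determined by the pattern of sets A_j containing t.  Hence for each
   approximation index n, accuracy 1/(m+1) and pattern b one representative
   time s suffices: any t with the same data has Gamma(t) within 2/(m+1) of
   Gamma(s) in the Hausdorff sense.  Compact values are separable, so the
   countably many representatives Gamma(s) yield a countable dense subset of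
   the union of all Gamma(t) off the exceptional null set. *)

Lemma geometric_sum_inv2 (R : realType) n :
  \sum_(0 <= k < n) (2 ^- k.+1 : R) = 1 - 2 ^- n.
Proof.
elim: n => [|n IH]; first by rewrite big_nil expr0 invr1 subrr.
rewrite big_nat_recr //= IH exprS invfM.
have : (0 : R) < 2 ^- n by rewrite invr_gt0 exprn_gt0.
lra.
Qed.

Lemma series_dominated_inv2 (R : realType) (u : nat -> R) :
  (forall k, 0 <= u k <= 2 ^- k.+1) ->
  [/\ cvgn (series u), 0 <= limn (series u) & limn (series u) <= 1].
Proof.
move=> hu.
have nd : nondecreasing_seq (series u).
  by rewrite seriesEnat; apply: nondecreasing_series => n _ _; case/andP: (hu n).
have ub n : series u n <= 1.
  rewrite seriesEnat /= (le_trans (ler_sum _ (fun k _ => (andP (hu k)).2))) //.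
  by rewrite geometric_sum_inv2 lerBlDr lerDl invr_ge0 exprn_ge0.
have cv : cvgn (series u).
  by apply: nondecreasing_is_cvgn => //; exists 1 => _ [n _ <-]; exact: ub.
split => //; last by apply: limr_le => //; near=> n; exact: ub.
apply: limr_ge => //; near=> n; rewrite seriesEnat /=; apply: sumr_ge0 => k _.
by case/andP: (hu k).
Unshelve. all: by end_near.
Qed.

Lemma frac1D_ge0_le1 (R : realType) (q : R) : 0 <= q -> 0 <= q / (1 + q) <= 1.
Proof.
move=> q0; apply/andP; split; first by rewrite divr_ge0 // addr_ge0.
by rewrite ler_pdivrMr ?mul1r ?lerDr //; lra.
Qed.

Lemma frac1D_subadditive (R : realType) (a b c : R) :
  0 <= a -> 0 <= b -> 0 <= c -> c <= a + b ->
  c / (1 + c) <= a / (1 + a) + b / (1 + b).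
Proof.
have ler_frac (x y u v : R) : 0 < u -> 0 < v -> x * v <= y * u -> x / u <= y / v.
  by move=> u0 v0; rewrite ler_pdivrMr // mulrAC ler_pdivlMr.
move=> a0 b0 c0 cab.
apply: (@le_trans _ _ ((a + b) / (1 + (a + b)))); first by apply: ler_frac; nra.
by rewrite mulrDl; apply: lerD; apply: ler_frac; nra.
Qed.

Lemma exists_invS_lt (R : realType) (e : R) : 0 < e ->
  exists m : nat, (m.+1%:R : R)^-1 < e.
Proof.
move=> e0; exists (Num.truncn e^-1).
by rewrite -[X in _ < X]invrK ltf_pV2 ?truncnS_gt // posrE ?invr_gt0.
Qed.

Section Seminorm.
Variables (R : realType) (X : lmodType R) (q : X -> R).
Hypothesis q_seminorm : seminorm q.

Lemma seminorm0 : q 0 = 0.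
Proof. by have := q_seminorm.2 0 0; rewrite scale0r normr0 mul0r. Qed.

Lemma seminormN x : q (- x) = q x.
Proof. by have := q_seminorm.2 (-1) x; rewrite scaleN1r normrN normr1 mul1r. Qed.

Lemma seminorm_ge0 x : 0 <= q x.
Proof.
have := q_seminorm.1 x (- x); rewrite subrr seminorm0 seminormN => h.
by rewrite -(@pmulr_rge0 _ 2) // mulr2n mulrDl !mul1r.
Qed.

End Seminorm.

Section FrechetMetric.
Variables (R : realType) (X : lmodType R) (p : nat -> X -> R).
Hypothesis p_seminorm : forall i, seminorm (p i).

Let fdist_term x y i := (2 ^- i.+1) * (p i (x - y) / (1 + p i (x - y))).

Let fdist_term_bound x y k : 0 <= fdist_term x y k <= 2 ^- k.+1.
Proof.
have /andP[h0 h1] := frac1D_ge0_le1 (seminorm_ge0 (p_seminorm k) (x - y)).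
have : (0 : R) < 2 ^- k.+1 by rewrite invr_gt0 exprn_gt0.
by move=> h; apply/andP; split; [rewrite mulr_ge0 // ltW | rewrite ler_piMr // ltW].
Qed.

Let fdist_series x y :
  [/\ cvgn (series (fdist_term x y)), 0 <= fdist p x y & fdist p x y <= 1].
Proof. exact: series_dominated_inv2 (fdist_term_bound x y). Qed.

Lemma fdist_ge0 x y : 0 <= fdist p x y.
Proof. by case: (fdist_series x y). Qed.

Lemma fdist_le1 x y : fdist p x y <= 1.
Proof. by case: (fdist_series x y). Qed.

Lemma fdistC x y : fdist p x y = fdist p y x.
Proof.
rewrite /fdist; congr (limn (series _)); apply/funext => i.
by rewrite -opprB seminormN.
Qed.

Lemma fdistxx x : fdist p x x = 0.
Proof.
rewrite /fdist (_ : series _ = fun _ => 0) ?lim_cst //.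
apply/funext => n; rewrite seriesEnat /= big1 // => i _.
by rewrite subrr seminorm0 // mul0r mulr0.
Qed.

Lemma fdist_triangle x y z : fdist p x z <= fdist p x y + fdist p y z.
Proof.
have [cxy _ _] := fdist_series x y; have [cyz _ _] := fdist_series y z.
have [cxz _ _] := fdist_series x z.
rewrite /fdist -lim_seriesD //; apply: lim_series_le => //; first exact: is_cvg_seriesD.
move=> k; rewrite /fdist_term /= -mulrDr ler_wpM2l ?invr_ge0 ?exprn_ge0 //.
apply: frac1D_subadditive; rewrite ?seminorm_ge0 //.
by rewrite -[x - z](subrKA y) (p_seminorm k).1.
Qed.

Lemma hexcess_lt_near A B r a : B !=set0 -> A a -> hexcess p A B < r ->
  exists2 b, B b & fdist p a b < r.
Proof.
move=> [b0 Bb0] Aa hr.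
have inf_le1 a' : inf [set fdist p a' b | b in B] <= 1.
  apply: le_trans (fdist_le1 a' b0); apply: ge_inf; last by exists b0.
  by exists 0 => _ [b _ <-]; exact: fdist_ge0.
have : inf [set fdist p a b | b in B] < r.
  apply: le_lt_trans hr; apply: ub_le_sup; last by exists a.
  by exists 1 => _ [a' _ <-]; exact: inf_le1.
by case/inf_lt => [|_ [b Bb <-] ?]; [exists (fdist p a b0), b0 | exists b].
Qed.

Lemma hausdorff_lt_nearl A B r a : B !=set0 -> A a -> hausdorff p A B < r ->
  exists2 b, B b & fdist p a b < r.
Proof. by move=> B0 Aa; rewrite gt_max => /andP[+ _]; exact: hexcess_lt_near. Qed.

Lemma hausdorff_lt_nearr A B r b : A !=set0 -> B b -> hausdorff p A B < r ->
  exists2 a, A a & fdist p b a < r.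
Proof. by move=> A0 Bb; rewrite gt_max => /andP[_]; exact: hexcess_lt_near. Qed.

Lemma dopen_ball x (r : R) : dopen p [set y | fdist p x y < r].
Proof.
move=> y hy; exists (r - fdist p x y); first by rewrite subr_gt0.
by move=> z hz; have := fdist_triangle x y z; rewrite /=; lra.
Qed.

Lemma dcompact_dseparable K : dcompact p K -> dseparable p K.
Proof.
move=> cK.
have /choice[F hF] (m : nat) : exists F : set X, [/\ finite_set F, F `<=` K &
    K `<=` \bigcup_(x in F) [set y | fdist p x y < (m.+1%:R)^-1]].
  have cover : K `<=` \bigcup_(x in [set: sig K])
      [set y | fdist p (sval x) y < (m.+1%:R)^-1].
    by move=> y Ky; exists (exist K y Ky) => //=; rewrite fdistxx invr_gt0 ltr0n.
  have [F fF cov] := cK _ _ (fun x => @dopen_ball (sval x) _) cover.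
  exists (sval @` F); split; first exact: finite_image.
    by move=> _ [x _ <-]; exact: svalP.
  by move=> y /cov[x Fx hx]; exists (sval x) => //; exists x.
exists (\bigcup_m F m); split.
- apply: bigcup_countable; first exact: countableP.
  by move=> m _; apply: finite_set_countable; case: (hF m).
- by move=> y [m _]; case: (hF m) => _ + _; apply.
- move=> x Kx e e0; have [m hm] := exists_invS_lt e0.
  have [_ _ /(_ x Kx)[y Fy hy]] := hF m.
  exists y; first by exists m.
  by rewrite fdistC (lt_trans hy hm).
Qed.

Lemma dseparable_bigcup (I : Type) (J : set I) (F : I -> set X) :
  countable J -> (forall i, J i -> dseparable p (F i)) ->
  dseparable p (\bigcup_(i in J) F i).
Proof.
move=> cJ sepF.
have /choice[D hD] i : exists D : set X, J i ->
    [/\ countable D, D `<=` F i &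
     forall x, F i x -> forall e : R, 0 < e -> exists2 y, D y & fdist p x y < e].
  by case: (pselect (J i)) => [/sepF[D]|nJ]; [exists D | exists set0].
exists (\bigcup_(i in J) D i); split.
- by apply: bigcup_countable => // i /hD[].
- by move=> y [i Ji Dy]; have [_ DF _] := hD i Ji; exists i; last exact: DF.
- move=> x [i Ji Fx] e e0; have [_ _ dense] := hD i Ji.
  by have [y Dy hy] := dense x Fx e e0; exists y => //; exists i.
Qed.

Lemma dseparable_approx (S A : set X) : S `<=` A -> dseparable p S ->
  (forall x, A x -> forall e : R, 0 < e -> exists2 y, S y & fdist p x y < e) ->
  dseparable p A.
Proof.
move=> SA [D [cD DS dense]] approx; exists D; split => // [y /DS/SA //|x Ax e e0].
have e20 : 0 < e / 2 by rewrite divr_gt0.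
have [y Sy hxy] := approx x Ax _ e20; have [w Dw hyw] := dense y Sy _ e20.
by exists w => //; have := fdist_triangle x y w; lra.
Qed.

Section PatternApproximation.
Variables (C : countType) (code : nat -> R -> C) (T : set R).
Variables (Gam : R -> set X) (Gn : nat -> R -> set X).
Hypothesis Gn_code : forall n t s, code n t = code n s -> Gn n t = Gn n s.
Hypothesis Gn_neq0 : forall n t, Gn n t !=set0.
Hypothesis Gam_neq0 : forall t, T t -> Gam t !=set0.
Hypothesis Gn_cvg : forall t, T t -> (fun n => hausdorff p (Gn n t) (Gam t)) @ \oo --> (0 : R).

Definition pattern_at (i : nat * nat * C) (t : R) : Prop :=
  [/\ T t, code i.1.1 t = i.2 & hausdorff p (Gn i.1.1 t) (Gam t) < (i.1.2.+1%:R)^-1].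

Definition pattern_rep (i : nat * nat * C) : R := xget 0 (pattern_at i).

Lemma pattern_repP i t : pattern_at i t -> pattern_at i (pattern_rep i).
Proof. by move=> hit; apply: xgetPex; exists t. Qed.

Lemma pattern_rep_approx x t (e : R) : T t -> Gam t x -> 0 < e ->
  exists2 i, (exists s, pattern_at i s) &
    exists2 y, Gam (pattern_rep i) y & fdist p x y < e.
Proof.
move=> Tt Gx e0.
have [m hm] : exists m : nat, (m.+1%:R : R)^-1 < e / 2.
  by apply: exists_invS_lt; rewrite divr_gt0.
have m0 : (0 : R) < (m.+1%:R)^-1 by rewrite invr_gt0.
move: (Gn_cvg Tt) => /cvgr_dist_lt/(_ _ m0)[n _ /(_ n (leqnn n))].
rewrite sub0r normrN => /(le_lt_trans (ler_norm _)) hn.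
have hit : pattern_at (n, m, code n t) t by [].
have [Trep code_rep hrep] := pattern_repP hit; rewrite /= in code_rep hrep.
have [a Ga hxa] := hausdorff_lt_nearr (Gn_neq0 n t) Gx hn.
rewrite -(Gn_code code_rep) in Ga.
have [y Gy hay] := hausdorff_lt_nearl (Gam_neq0 Trep) Ga hrep.
exists (n, m, code n t); first by exists t.
exists y => //; rewrite (le_lt_trans (fdist_triangle x a y)) // [e]splitr.
by rewrite ltrD // (lt_trans _ hm).
Qed.

End PatternApproximation.

Lemma simple_multifunction_pattern G : simple_multifunction p G ->
  exists code : R -> seq bool,
    (forall t s, code t = code s -> G t = G s) /\ (forall t, G t !=set0).
Proof.
case=> s [_ _ hcb ->]; exists (fun t => [seq t \in AC.1 | AC <- s]); split.
  move=> t t'; elim: s {hcb} => [//|AC s IH] /= [h1 /IH ->].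
  by rewrite !indicE h1.
move=> t; elim: s hcb => [|AC s IH] hcb /=; first by exists 0.
have [c Cc] : AC.2 !=set0 by case: (hcb 0%N isT).
have [y Sy] := IH (fun j => hcb j.+1).
exists (\1_(AC.1) t *: c + y); exists (\1_(AC.1) t *: c); first by exists c.
by exists y.
Qed.

End FrechetMetric.

Theorem theorem3p6 (R : realType) (X : lmodType R) (p : nat -> X -> R)
  (Gam : R -> set X) :
  frechet p ->
  (forall t, `[0, 1]%classic t -> ck p (Gam t)) ->
  bochner_measurable p Gam ->
  exists N : set R, (@lebesgue_measure R).-negligible N /\
    dseparable p (\bigcup_(t in `[0, 1]%classic `\` N) Gam t).
Proof.
case=> p_seminorm _ _ _ Gam_ck [Gn [Gn_simple [N [N0 Gn_cvg]]]].
exists N; split => //.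
have /choice[code Gn_pattern] n := simple_multifunction_pattern (Gn_simple n).
set T := `[0, 1]%classic `\` N.
have Gam_ckT t : T t -> ck p (Gam t) by case=> /Gam_ck.
have Gam_neq0 t : T t -> Gam t !=set0 by case/Gam_ckT.
have Gn_cvgT t : T t -> (fun n => hausdorff p (Gn n t) (Gam t)) @ \oo --> (0 : R).
  by case=> t01; exact: Gn_cvg.
pose rep := pattern_rep p code T Gam Gn.
pose J := [set i | exists s, pattern_at p code T Gam Gn i s].
apply: (@dseparable_approx _ _ _ p_seminorm (\bigcup_(i in J) Gam (rep i))).
- by move=> x [i [s /pattern_repP[Trep _ _]] ?]; exists (rep i).
- apply: dseparable_bigcup; first exact: countableP.
  by move=> i [s /pattern_repP[/Gam_ckT[_ cK _] _ _]]; exact: dcompact_dseparable.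
- move=> x [t Tt Gx] e e0.
  have [i Ji [y Gy hxy]] := pattern_rep_approx p_seminorm (fun n => (Gn_pattern n).1)
    (fun n => (Gn_pattern n).2) Gam_neq0 Gn_cvgT Tt Gx e0.
  by exists y => //; exists i.
Qed.
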